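(* Let $w \in S_n$ with Lehmer code $L(w) = (L_1,\dots,L_n)$. Then $w$ avoids the patterns $1432$ and $312$ if and only if $L(w)$ satisfies all three of the following rules: (1) $L_i - L_{i+1} \le 1$ for all $1 \le i < n$; (2) $L_i - L_{i+1} \ge -1$ for all $1 \le i < n$; (3) whenever $i < j$ with $L_i < L_{i+1}$ and $L_j < L_{j+1}$, there is some $k$ with $i < k < j$ such that $L_k > L_{k+1}$.
   Context: The Lehmer code of $w \in S_n$ is $L(w) = (L_1,\dots,L_n)$ with $L_i = |\{j > i : w(j) < w(i)\}|$. A permutation $w$ contains a pattern $p \in S_k$ if there are indices $i_1 < \dots < i_k$ with $w(i_1),\dots,w(i_k)$ in the same relative order as $p(1),\dots,p(k)$; otherwise it avoids $p$. *)

From mathcomp Require Import all_boot all_fingroup.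
Set Implicit Arguments. Unset Strict Implicit. Unset Printing Implicit Defensive.

(* Permutations w in S_n are elements of 'S_n = {perm 'I_n}; positions and
   values are 0-indexed (position i here is position i+1 in the paper). *)

Definition lehmer (n : nat) (w : 'S_n) (i : 'I_n) : nat :=
  #|[set j : 'I_n | (i < j) && (w j < w i)]|.

Definition contains (n : nat) (w : 'S_n) (p : seq nat) : Prop :=
  exists f : 'I_(size p) -> 'I_n,
    (forall a b : 'I_(size p), a < b -> f a < f b) /\
    (forall a b : 'I_(size p), (w (f a) < w (f b)) = (nth 0 p a < nth 0 p b)).

Definition avoids (n : nat) (w : 'S_n) (p : seq nat) : Prop := ~ contains w p.

From mathcomp Require Import all_boot all_fingroup zify.
Set Implicit Arguments. Unset Strict Implicit. Unset Printing Implicit Defensive.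

(* Everything rests on comparing the Lehmer code at adjacent positions i, i+1.
   At an ascent w(i) < w(i+1), L_(i+1) - L_i counts the later values lying
   strictly between w(i) and w(i+1); at a descent, L_i - L_(i+1) - 1 counts the
   later values strictly between w(i+1) and w(i).  So rule (1) fails exactly at
   a descent with a later value in its gap, i.e. at a 312 whose "31" is
   adjacent; any 312 yields one of that kind by locating, between its "3" and
   its "1", an adjacent descent crossing the value of its "2".  Rule (2) fails
   exactly at an ascent with two later values in its gap, and these two values
   complete a 312 or a 1432.  If rule (3) fails for ascents at i < j, then w
   increases from i+1 to j+1 and the gap values of the two ascents again
   complete a 312 or a 1432.  Conversely, from an occurrence of 1432 the rules
   (2) and (3) produce another one whose first two entries are closer, so by
   descent there is none. *)

Lemma card_set_sum (T : finType) (P : pred T) : #|[set x | P x]| = \sum_x P x.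
Proof. by rewrite -sum1dep_card big_mkcond /=; apply: eq_bigr => x _; case: (P x). Qed.

Lemma nat_adjacent_switch (P : pred nat) (a b : nat) : a < b -> P a -> ~~ P b ->
  exists2 k, a <= k < b & P k && ~~ P k.+1.
Proof.
elim: b => // b IH; rewrite ltnS leq_eqVlt => /predU1P[<- | ltab] Pa Pb.
  by exists a; rewrite ?leqnn ?ltnSn ?Pa.
case Pb': (P b); first by exists b; [apply/andP; lia | rewrite Pb' Pb].
by have [k ? ?] := IH ltab Pa (negbT Pb'); exists k => //; lia.
Qed.

Section LehmerCode.

Variables (n : nat) (w : 'S_n).

Lemma val_perm_eq (i j : 'I_n) : ((i : nat) == j) = ((w i : nat) == w j).
Proof. by rewrite !val_eqE (inj_eq perm_inj). Qed.

Lemma adjacent_switch (P : pred 'I_n) (a b : 'I_n) : a < b -> P a -> ~~ P b ->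
  exists k k' : 'I_n, [/\ k' = k.+1 :> nat, a <= k, k < b, P k & ~~ P k'].
Proof.
move=> ab Pa Pb; pose Q m := P (insubd a m).
have [||k /andP[ak kb] /andP[Qk Qk']] := @nat_adjacent_switch Q a b ab;
  rewrite /Q ?valKd //.
have val_k m : m <= b -> insubd a m = m :> nat.
  by move=> mb; rewrite val_insubd (leq_ltn_trans mb).
by exists (insubd a k), (insubd a k.+1); rewrite !val_k ?(ltnW kb).
Qed.

Lemma descent_across (a b : 'I_n) (v : nat) : a < b -> w b <= v < w a ->
  exists k k' : 'I_n, [/\ k' = k.+1 :> nat, a <= k, k < b & w k' <= v < w k].
Proof.
move=> ab /andP[bv va].
have [||k [k' [kk' ak kb vk vk']]] := @adjacent_switch (fun k => v < w k) a b ab;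
  rewrite /= -?leqNgt //.
by exists k, k'; rewrite /= -leqNgt in vk'; rewrite vk vk'.
Qed.

Lemma ascent_across (a b : 'I_n) (v : nat) : a < b -> w a < v <= w b ->
  exists k k' : 'I_n, [/\ k' = k.+1 :> nat, a <= k, k < b & w k < v <= w k'].
Proof.
move=> ab /andP[av vb].
have [||k [k' [kk' ak kb vk vk']]] := @adjacent_switch (fun k => w k < v) a b ab;
  rewrite /= -?leqNgt //.
by exists k, k'; rewrite /= -leqNgt in vk'; rewrite vk vk'.
Qed.

Definition later_between (k : 'I_n) (lo hi : nat) : {set 'I_n} :=
  [set j : 'I_n | (k < j) && (lo < w j < hi)].

Lemma lehmer_ascent (i i' : 'I_n) : i' = i.+1 :> nat -> w i < w i' ->
  lehmer w i' = lehmer w i + #|later_between i' (w i) (w i')|.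
Proof.
move=> ii' wii'; rewrite /lehmer /later_between !card_set_sum -big_split /=.
by apply: eq_bigr => j _; have := val_perm_eq i j; have := val_perm_eq i' j; lia.
Qed.

Lemma lehmer_descent (i i' : 'I_n) : i' = i.+1 :> nat -> w i' < w i ->
  lehmer w i = (lehmer w i' + #|later_between i' (w i') (w i)|).+1.
Proof.
move=> ii' wi'i; rewrite /lehmer /later_between !card_set_sum -big_split /=.
rewrite (bigD1 i') // [in RHS](bigD1 i') //= !ltnn /= ii' ltnSn wi'i -addSn.
congr (_ + _); apply: eq_bigr => j; rewrite -val_eqE /= => ji'.
by have := val_perm_eq i j; have := val_perm_eq i' j; lia.
Qed.

Lemma lehmer_rise_gt0E (i i' : 'I_n) : i' = i.+1 :> nat -> w i < w i' ->
  (lehmer w i < lehmer w i') = (0 < #|later_between i' (w i) (w i')|).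
Proof.
by move=> ii' wii'; rewrite (lehmer_ascent ii' wii') -{1}[lehmer w i]addn0 ltn_add2l.
Qed.

Lemma lehmer_rise_le1E (i i' : 'I_n) : i' = i.+1 :> nat -> w i < w i' ->
  (lehmer w i' <= (lehmer w i).+1) = (#|later_between i' (w i) (w i')| <= 1).
Proof. by move=> ii' wii'; rewrite (lehmer_ascent ii' wii') -addn1 leq_add2l. Qed.

Lemma lehmer_drop_le1E (i i' : 'I_n) : i' = i.+1 :> nat -> w i' < w i ->
  (lehmer w i <= (lehmer w i').+1) = (later_between i' (w i') (w i) == set0).
Proof.
move=> ii' wi'i; rewrite (lehmer_descent ii' wi'i) ltnS -cards_eq0.
by rewrite -[X in _ <= X]addn0 leq_add2l leqn0.
Qed.

Lemma ascentE (i i' : 'I_n) : i' = i.+1 :> nat ->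
  (w i < w i') = (lehmer w i <= lehmer w i').
Proof.
move=> ii'; case: (ltngtP (w i) (w i')) => [lt | gt | eq_w].
- by rewrite (lehmer_ascent ii' lt) leq_addr.
- by rewrite (lehmer_descent ii' gt); lia.
- by have := val_perm_eq i i'; lia.
Qed.

Lemma descentE (i i' : 'I_n) : i' = i.+1 :> nat ->
  (w i' < w i) = (lehmer w i' < lehmer w i).
Proof. by move=> ii'; have := ascentE ii'; have := val_perm_eq i i'; lia. Qed.

Definition occurs312 (a b c : 'I_n) := [&& a < b, b < c, w b < w c & w c < w a].

Definition occurs1432 (a b c d : 'I_n) :=
  [&& a < b, b < c, c < d & [&& w a < w d, w d < w c & w c < w b]].

Lemma contains312P : contains w [:: 3; 1; 2] <-> exists a b c, occurs312 a b c.
Proof.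
split=> [[f [f_mono f_ord]] | [a [b [c /and4P[ab bc wbc wca]]]]].
  pose o0 := @Ordinal 3 0 isT; pose o1 := @Ordinal 3 1 isT; pose o2 := @Ordinal 3 2 isT.
  by exists (f o0), (f o1), (f o2); apply/and4P; split; rewrite ?f_mono ?f_ord.
exists (fun x : 'I_3 => nth a [:: a; b; c] x); split.
  by move=> [[|[|[|x]]] ?] [[|[|[|y]]] ?] //=; lia.
by move=> [[|[|[|x]]] ?] [[|[|[|y]]] ?] //=; lia.
Qed.

Lemma contains1432P :
  contains w [:: 1; 4; 3; 2] <-> exists a b c d, occurs1432 a b c d.
Proof.
split=> [[f [f_mono f_ord]] | [a [b [c [d /and4P[ab bc cd /and3P[wad wdc wcb]]]]]]].
  pose o0 := @Ordinal 4 0 isT; pose o1 := @Ordinal 4 1 isT.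
  pose o2 := @Ordinal 4 2 isT; pose o3 := @Ordinal 4 3 isT.
  exists (f o0), (f o1), (f o2), (f o3).
  by apply/and4P; split; rewrite ?f_mono //; apply/and3P; split; rewrite f_ord.
exists (fun x : 'I_4 => nth a [:: a; b; c; d] x); split.
  by move=> [[|[|[|[|x]]]] ?] [[|[|[|[|y]]]] ?] //=; lia.
by move=> [[|[|[|[|x]]]] ?] [[|[|[|[|y]]]] ?] //=; lia.
Qed.

Definition lehmer_drops_le1 :=
  forall i i' : 'I_n, i' = i.+1 :> nat -> lehmer w i <= (lehmer w i').+1.

Definition lehmer_rises_le1 :=
  forall i i' : 'I_n, i' = i.+1 :> nat -> lehmer w i' <= (lehmer w i).+1.

Definition lehmer_rises_separated :=
  forall i i' j j' : 'I_n, i' = i.+1 :> nat -> j' = j.+1 :> nat ->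
    i < j -> lehmer w i < lehmer w i' -> lehmer w j < lehmer w j' ->
    exists k k' : 'I_n, [/\ k' = k.+1 :> nat, i < k, k < j & lehmer w k > lehmer w k'].

Lemma avoids312E : avoids w [:: 3; 1; 2] <-> lehmer_drops_le1.
Proof.
rewrite /avoids contains312P; split=> [no312 i i' ii' | drops [a [b [c]]]].
  case: (ltngtP (w i) (w i')) => [lt | gt | eq_w].
  - by move: lt; rewrite (ascentE ii'); lia.
  - rewrite (lehmer_drop_le1E ii' gt); apply/eqP/setP => m; rewrite !inE.
    by apply/negP => m_between; case: no312; exists i, i', m; rewrite /occurs312; lia.
  - by have := val_perm_eq i i'; lia.
case/and4P=> ab bc wbc wca.
have [|k [k' [kk' ak kb /andP[wk'c wck]]]] := @descent_across a b (w c) ab.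
  by rewrite wca ltnW.
have {}wk'c : w k' < w c by have := val_perm_eq k' c; lia.
have := drops k k' kk'; rewrite (lehmer_drop_le1E kk' (ltn_trans wk'c wck)).
by apply/negP/set0Pn; exists c; rewrite inE; lia.
Qed.

Lemma avoids_rises_le1 :
  avoids w [:: 3; 1; 2] -> avoids w [:: 1; 4; 3; 2] -> lehmer_rises_le1.
Proof.
rewrite /avoids contains312P contains1432P => no312 no1432 i i' ii'.
case: (ltngtP (w i) (w i')) => [lt | gt | eq_w].
- rewrite (lehmer_rise_le1E ii' lt) leqNgt.
  set B := later_between i' (w i) (w i').
  have no_pair (x y : 'I_n) : x < y -> x \in B -> y \in B -> False.
    rewrite !inE => xy xB yB; case: (ltngtP (w x) (w y)) => [wxy | wyx | eq_w].
    + by apply: no312; exists i', x, y; rewrite /occurs312; lia.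
    + by apply: no1432; exists i, i', x, y; rewrite /occurs1432; lia.
    + by have := val_perm_eq x y; lia.
  apply/card_gt1P => -[x [y [xB yB neq]]].
  case: (ltngtP x y) => [xy | yx | /val_inj eq_xy]; first exact: (no_pair x y).
    exact: (no_pair y x).
  by rewrite eq_xy eqxx in neq.
- by move: gt; rewrite (descentE ii'); lia.
- by have := val_perm_eq i i'; lia.
Qed.

Lemma avoids_rises_separated :
  avoids w [:: 3; 1; 2] -> avoids w [:: 1; 4; 3; 2] -> lehmer_rises_separated.
Proof.
rewrite /avoids contains312P contains1432P => no312 no1432 i i' j j' ii' jj' ij Lii' Ljj'.
have wii' : w i < w i' by rewrite (ascentE ii') ltnW.
have wjj' : w j < w j' by rewrite (ascentE jj') ltnW.
move: Lii' Ljj'; rewrite (lehmer_rise_gt0E ii' wii') (lehmer_rise_gt0E jj' wjj').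
move=> /card_gt0P[m m_between] /card_gt0P[m' m'_between].
rewrite !inE in m_between m'_between.
have descent_before (p : 'I_n) : i' < p -> p <= j' -> w p < w i' ->
    exists k k' : 'I_n, [/\ k' = k.+1 :> nat, i < k, k < j & lehmer w k > lehmer w k'].
  move=> i'p pj' wpi'.
  have [|k [k' [kk' i'k kp /andP[wk'p wpk]]]] := @descent_across i' p (w p) i'p.
    by rewrite leqnn.
  have kj : k < j by have := val_perm_eq k j; have := val_perm_eq k' j'; lia.
  by exists k, k'; rewrite -(descentE kk'); split; lia.
case: (ltnP j' m) => [j'm | mj']; last by apply: (descent_before m); lia.
case: (ltnP (w j) (w i')) => [wji' | wi'j].
  by apply: (descent_before j) => //; have := val_perm_eq i' j; lia.
case: (ltngtP m m') => [mm' | m'm | /val_inj eq_mm'].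
- by case: no312; exists j', m, m'; rewrite /occurs312; lia.
- by case: no1432; exists i, j', m', m; rewrite /occurs1432; lia.
- by move: m_between; rewrite eq_mm'; lia.
Qed.

Lemma shorter_occurs1432 (a b c d : 'I_n) :
  lehmer_rises_le1 -> lehmer_rises_separated -> occurs1432 a b c d ->
  exists a' b' c' d', occurs1432 a' b' c' d' /\ b' - a' < b - a.
Proof.
move=> rises sep /and4P[ab bc cd /and3P[wad wdc wcb]].
have [|i [i' [ii' ai i'b /andP[wid wdi']]]] := @ascent_across a b (w d) ab.
  by rewrite wad (ltnW (ltn_trans wdc wcb)).
have {}wdi' : w d < w i' by have := val_perm_eq d i'; lia.
have wii' : w i < w i' by lia.
have d_between : d \in later_between i' (w i) (w i') by rewrite inE; lia.
have wi'c : w i' < w c.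
  case: (ltngtP (w c) (w i')) => [wci' | // | eq_ci'].
    have := rises i i' ii'; rewrite (lehmer_rise_le1E ii' wii') leqNgt => /negP[].
    by apply/card_gt1P; exists c, d; rewrite d_between inE -val_eqE /=; split=> //; lia.
  by have := val_perm_eq c i'; lia.
have i'b' : i' < b by have := val_perm_eq i' b; lia.
have [|e [e' [ee' i'e eb /andP[wec wce']]]] := @ascent_across i' b (w c) i'b'.
  by rewrite wi'c ltnW.
have {}wce' : w c < w e' by have := val_perm_eq c e'; lia.
have Lii' : lehmer w i < lehmer w i'.
  by rewrite (lehmer_rise_gt0E ii' wii'); apply/card_gt0P; exists d.
have Lee' : lehmer w e < lehmer w e'.
  rewrite (lehmer_rise_gt0E ee' (ltn_trans wec wce')).
  by apply/card_gt0P; exists c; rewrite inE; lia.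
have [k [k' [kk' ik ke]]] := sep i i' e e' ii' ee' ltac:(lia) Lii' Lee'.
rewrite -(descentE kk') => wk'k.
case: (ltngtP (w k') (w d)) => [wk'd | wdk' | eq_k'd].
- by exists k', b, c, d; rewrite /occurs1432; lia.
- by exists i, k, k', d; rewrite /occurs1432; lia.
- by have := val_perm_eq k' d; lia.
Qed.

Lemma rises_avoids1432 :
  lehmer_rises_le1 -> lehmer_rises_separated -> avoids w [:: 1; 4; 3; 2].
Proof.
rewrite /avoids contains1432P => rises sep [a [b [c [d occ]]]].
have [bound] := ubnP (b - a); elim: bound a b c d occ => // bound IH a b c d occ lt_bound.
have [a' [b' [c' [d' [occ' shorter]]]]] := shorter_occurs1432 rises sep occ.
exact: IH occ' (leq_trans shorter lt_bound).
Qed.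

End LehmerCode.

Theorem lemma11 (n : nat) (w : 'S_n) :
  (avoids w [:: 1; 4; 3; 2] /\ avoids w [:: 3; 1; 2]) <->
  [/\ (* rule (1): L_i - L_{i+1} <= 1 *)
      (forall i j : 'I_n, j = i.+1 :> nat -> lehmer w i <= (lehmer w j).+1),
      (* rule (2): L_i - L_{i+1} >= -1 *)
      (forall i j : 'I_n, j = i.+1 :> nat -> lehmer w j <= (lehmer w i).+1) &
      (* rule (3) *)
      (forall i i' j j' : 'I_n, i' = i.+1 :> nat -> j' = j.+1 :> nat ->
         i < j -> lehmer w i < lehmer w i' -> lehmer w j < lehmer w j' ->
         exists k k' : 'I_n, [/\ k' = k.+1 :> nat, i < k, k < j &
                                 lehmer w k > lehmer w k'])].
Proof.
split=> [[no1432 no312] | [drops rises sep]].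
  split; first exact/avoids312E.
  - exact: avoids_rises_le1.
  - exact: avoids_rises_separated.
split; first exact: rises_avoids1432.
exact/avoids312E.
Qed.
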